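(* Let $(X,\|\cdot\|)$ be a real Banach space and $C\subseteq B_X$ a nonempty absolutely convex closed subset such that every convex combination of slices of $C$ has $\|\cdot\|$-diameter $2$. Then for every $\varepsilon>0$ there is an equivalent norm $|\cdot|$ on $X$ such that every convex combination of slices of $B_{(X,|\cdot|)}$ has $|\cdot|$-diameter at least $2-\varepsilon$.
   Context: For a bounded set $A$ in a Banach space, a slice of $A$ is a nonempty set of the form $S(A,f,\alpha)=\{a\in A: f(a)>\sup_Af-\alpha\}$ with $f$ a nonzero continuous linear functional and $\alpha>0$. A convex combination of slices of $A$ is a Minkowski sum $\sum_{i=1}^n\lambda_iS_i=\{\sum_i\lambda_is_i: s_i\in S_i\}$ with $S_i$ slices of $A$, $\lambda_i>0$, $\sum_i\lambda_i=1$. Absolutely convex means convex and symmetric ($C=-C$). *)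

From HB Require Import structures.
From mathcomp Require Import all_boot all_order all_algebra.
From mathcomp Require Import all_classical all_reals all_analysis.
Set Implicit Arguments. Unset Strict Implicit. Unset Printing Implicit Defensive.
Import Order.TTheory GRing.Theory Num.Theory.
Import numFieldNormedType.Exports.
Local Open Scope classical_set_scope.
Local Open Scope ring_scope.

Section Defs.
Context {R : realType} {X : normedModType R}.

Definition lin_functional (f : X -> R) : Prop :=
  forall (a : R) (x y : X), f (a *: x + y) = a * f x + f y.

Definition slice (A : set X) (f : X -> R) (alpha : R) : set X :=
  [set a | A a /\ sup (f @` A) - alpha < f a].

Definition is_slice (A : set X) (S : set X) : Prop :=
  exists (f : X -> R) (alpha : R),
    [/\ lin_functional f, continuous f, (exists x, f x != 0), 0 < alpha &
        (S = slice A f alpha /\ S !=set0)].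

Definition is_ccslices (A : set X) (D : set X) : Prop :=
  exists (n : nat) (lam : 'I_n -> R) (S : 'I_n -> set X),
    [/\ (forall i, 0 < lam i), \sum_(i < n) lam i = 1,
        (forall i, is_slice A (S i)) &
        D = [set x | exists s : 'I_n -> X,
                       (forall i, S i (s i)) /\ x = \sum_(i < n) lam i *: s i]].

Definition diam (N : X -> R) (A : set X) : \bar R :=
  ereal_sup [set ((N (x - y))%:E) | x in A & y in A].

Definition is_norm (N : X -> R) : Prop :=
  [/\ (forall x y, N (x + y) <= N x + N y),
      (forall (a : R) x, N (a *: x) = `|a| * N x) &
      (forall x, N x = 0 -> x = 0)].

Definition equiv_norm (N : X -> R) : Prop :=
  is_norm N /\ exists m M : R, [/\ 0 < m, 0 < M &
    forall x, m * `|x| <= N x /\ N x <= M * `|x|].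

Definition absolutely_convex (C : set X) : Prop :=
  (forall x y (t : R), C x -> C y -> 0 <= t <= 1 -> C (t *: x + (1 - t) *: y))
  /\ (forall x, C x -> C (- x)).

Definition unit_ball (N : X -> R) : set X := [set x | N x <= 1].

End Defs.

From HB Require Import structures.
From mathcomp Require Import all_boot all_order all_algebra.
From mathcomp Require Import all_classical all_reals all_analysis.
From mathcomp Require Import ring lra.
Import Order.TTheory GRing.Theory Num.Theory.
Import numFieldNormedType.Exports.
Local Open Scope classical_set_scope.
Local Open Scope ring_scope.
Set Implicit Arguments. Unset Strict Implicit.

(* The new norm [N] is the Minkowski functional of [C + d B_X] with [d = eps / 4].
   Adding a near-supremum point of a functional on [C] and one on [d B_X]
   gives a near-supremum point on [C + d B_X], so every slice of the new unit
   ball contains a translate of a slice of [C].  Hence every convex combination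
   of slices of the new ball contains a translate of a convex combination of
   slices of [C], whose norm-diameter is [2].  Since [|x| <= (1 + d) N x], its
   [N]-diameter is at least [2 / (1 + d) >= 2 - eps]. *)

Section LinearFunctional.
Context {R : realType} {X : normedModType R} (f : X -> R).
Hypothesis f_lin : lin_functional f.

Lemma lin_functional0 : f 0 = 0.
Proof.
have := f_lin 1 0 0; rewrite scale1r addr0 mul1r.
by move/(congr1 (fun z => z - f 0)); rewrite addrK subrr => <-.
Qed.

Lemma lin_functionalZ a x : f (a *: x) = a * f x.
Proof. by have := f_lin a x 0; rewrite addr0 lin_functional0 addr0. Qed.

Lemma lin_functionalD x y : f (x + y) = f x + f y.
Proof. by have := f_lin 1 x y; rewrite scale1r mul1r. Qed.

Hypothesis f_cont : continuous f.

Lemma lin_functional_bounded :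
  exists2 M, 0 < M & forall x : X, `|x| <= 1 -> `|f x| <= M.
Proof.
have [r /= r0 Hr] := iffLR (nbhs_ballP _ _) (cvgr_dist_lt _ _ (@f_cont 0) 1 ltr01).
exists (2 / r) => [|x x1]; first by rewrite divr_gt0.
have : `|f 0 - f ((r / 2) *: x)| < 1.
  apply: Hr; rewrite -ball_normE /= sub0r normrN normrZ gtr0_norm ?divr_gt0 //.
  apply: le_lt_trans (ler_wpM2l _ x1) _; first by rewrite ltW // divr_gt0.
  by rewrite mulr1 ltr_pdivrMr // ltr_pMr // ltr1n.
rewrite lin_functional0 sub0r normrN lin_functionalZ normrM.
rewrite gtr0_norm ?divr_gt0 // => h.
rewrite ler_pdivlMr //; apply: ltW.
by move: h; rewrite mulrC mulrA ltr_pdivrMr // mul1r.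
Qed.

Lemma has_sup_lin_functional (A : set X) :
  A !=set0 -> A `<=` unit_ball (fun x : X => `|x|) -> has_sup (f @` A).
Proof.
move=> [a Aa] Ab; have [M _ HM] := lin_functional_bounded.
split; first by exists (f a), a.
by exists M => _ [z Az <-]; apply: le_trans (ler_norm _) (HM _ (Ab _ Az)).
Qed.

End LinearFunctional.

Lemma absolutely_convex0 {R : realType} {X : normedModType R} (C : set X) c :
  absolutely_convex C -> C c -> C 0.
Proof.
move=> C_absconv Cc; have := C_absconv.1 _ _ (1 / 2) Cc (C_absconv.2 _ Cc).
have -> : 1 - 1 / 2 = 1 / 2 :> R by field.
by rewrite scalerN subrr; apply; lra.
Qed.

Section Gauge.
Context {R : realType} {X : normedModType R}.
Variables (C : set X) (d : R).
Hypothesis C_absconv : absolutely_convex C.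
Hypothesis C0 : C 0.
Hypothesis C_ball : C `<=` unit_ball (fun x : X => `|x|).
Hypothesis d_gt0 : 0 < d.

Local Notation B := (unit_ball (fun x : X => `|x|)).

Definition gauge_radii (x : X) : set R :=
  [set t | 0 < t /\ exists c y, [/\ C c, `|y| <= 1 & x = t *: (c + d *: y)]].

Definition gauge (x : X) : R := inf (gauge_radii x).

Lemma absolutely_convexZ s c : 0 <= s <= 1 -> C c -> C (s *: c).
Proof.
by move=> s01 Cc; have := C_absconv.1 _ _ _ Cc C0 s01; rewrite scaler0 addr0.
Qed.

Lemma gauge_radii_ge x t t' : gauge_radii x t -> t <= t' -> gauge_radii x t'.
Proof.
move=> [t0 [c [y [Cc y1 ->]]]] tt'.
have t'0 : 0 < t' by apply: lt_le_trans tt'.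
have s01 : 0 <= t / t' <= 1.
  by apply/andP; split; [rewrite divr_ge0 // ltW | rewrite ler_pdivrMr // mul1r].
have /andP[s0 s1] := s01.
split=> //; exists ((t / t') *: c), ((t / t') *: y); split.
- exact: absolutely_convexZ.
- by rewrite normrZ ger0_norm // -(mulr1 1) ler_pM.
- have t'n : t' != 0 by rewrite gt_eqF.
  by rewrite !scalerDr !scalerA; congr (_ *: _ + _ *: _); field.
Qed.

Lemma gauge_radii_norm_lt x t : `|x| / d < t -> gauge_radii x t.
Proof.
move=> ht; have t0 : 0 < t by apply: le_lt_trans ht; rewrite divr_ge0 // ltW.
have td : t * d != 0 by rewrite mulf_neq0 // gt_eqF.
split=> //; exists 0, ((t * d)^-1 *: x); split=> //.
- rewrite normrZ ger0_norm ?invr_ge0 ?mulr_ge0 ?ltW //.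
  by rewrite mulrC ltr_pdivrMr ?mulr_gt0 // mul1r -ltr_pdivrMr.
- by rewrite add0r !scalerA divff // scale1r.
Qed.

Lemma gauge_radii_lbound x : has_lbound (gauge_radii x).
Proof. by exists 0 => t [t0 _]; apply: ltW. Qed.

Lemma gauge_radii_neq0 x : gauge_radii x !=set0.
Proof. by exists (`|x| / d + 1); apply: gauge_radii_norm_lt; rewrite ltrDl. Qed.

Lemma gauge_le x t : gauge_radii x t -> gauge x <= t.
Proof. exact: ge_inf (gauge_radii_lbound x) _. Qed.

Lemma gauge_radii_gauge_lt x t : gauge x < t -> gauge_radii x t.
Proof.
move=> h; have [e Te] : exists2 e, gauge_radii x e & e < gauge x + (t - gauge x).
  apply: inf_adherent; first by rewrite subr_gt0.
  by split; [apply: gauge_radii_neq0 | apply: gauge_radii_lbound].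
by rewrite addrC subrK => /ltW; apply: gauge_radii_ge.
Qed.

Lemma gauge_ge0 x : 0 <= gauge x.
Proof. by apply: lb_le_inf (gauge_radii_neq0 x) _ => t [/ltW]. Qed.

Lemma norm_le_gauge_radii x t : gauge_radii x t -> `|x| <= t * (1 + d).
Proof.
move=> [t0 [c [y [Cc y1 ->]]]].
rewrite normrZ (ger0_norm (ltW t0)) ler_pM2l //.
apply: le_trans (ler_normD _ _) _; rewrite normrZ (ger0_norm (ltW d_gt0)).
by apply: lerD; [exact: C_ball | rewrite -{2}(mulr1 d) ler_pM2l].
Qed.

Lemma norm_le_gauge x : `|x| <= (1 + d) * gauge x.
Proof.
apply/ler_addgt0Pr => e e0; have d1 : 0 < 1 + d by rewrite addr_gt0.
have /gauge_radii_gauge_lt/norm_le_gauge_radii : gauge x < gauge x + e / (1 + d).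
  by rewrite ltrDl divr_gt0.
by rewrite mulrDl mulrC [e / _ * _]mulrC mulrCA divff ?mulr1 // gt_eqF.
Qed.

Lemma gauge_le_norm x : gauge x <= `|x| / d.
Proof.
by apply/ler_addgt0Pr => e e0; apply/gauge_le/gauge_radii_norm_lt; rewrite ltrDl.
Qed.

Lemma gauge_radiiD x x' t s :
  gauge_radii x t -> gauge_radii x' s -> gauge_radii (x + x') (t + s).
Proof.
move=> [t0 [c [y [Cc y1 ->]]]] [s0 [c' [y' [Cc' y1' ->]]]].
have ts0 : 0 < t + s by rewrite addr_gt0.
set u := t / (t + s).
have u01 : 0 <= u <= 1.
  apply/andP; split; first by rewrite divr_ge0 // ltW.
  by rewrite ler_pdivrMr // mul1r lerDl ltW.
have /andP[u0 u1] := u01.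
split=> //; exists (u *: c + (1 - u) *: c'), (u *: y + (1 - u) *: y'); split.
- exact: C_absconv.1.
- apply: le_trans (ler_normD _ _) _.
  rewrite !normrZ -normrM -/u (ger0_norm u0).
  rewrite (ger0_norm (_ : 0 <= 1 - u)) ?subr_ge0 //.
  apply: (@le_trans _ _ (u * 1 + (1 - u) * 1)); last by rewrite !mulr1 addrC subrK.
  by apply: lerD; apply: ler_wpM2l => //; rewrite subr_ge0.
- have tsn : t + s != 0 by rewrite gt_eqF.
  rewrite !scalerDr !scalerA [RHS]addrACA /u.
  by congr (_ + _ + (_ + _)); congr (_ *: _); field.
Qed.

Lemma gaugeD x y : gauge (x + y) <= gauge x + gauge y.
Proof.
apply/ler_addgt0Pr => e e0; have e2 : 0 < e / 2 by rewrite divr_gt0.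
have hx : gauge_radii x (gauge x + e / 2) by apply: gauge_radii_gauge_lt; rewrite ltrDl.
have hy : gauge_radii y (gauge y + e / 2) by apply: gauge_radii_gauge_lt; rewrite ltrDl.
apply: le_trans (gauge_le (gauge_radiiD hx hy)) _.
by rewrite addrACA -splitr.
Qed.

Lemma gauge0 : gauge 0 = 0.
Proof.
apply/eqP; rewrite eq_le gauge_ge0 andbT.
by apply: le_trans (gauge_le_norm 0) _; rewrite normr0 mul0r.
Qed.

Lemma gauge_radiiZ a x t :
  a != 0 -> gauge_radii x t -> gauge_radii (a *: x) (`|a| * t).
Proof.
move=> an [t0 [c [y [Cc y1 ->]]]].
split; first by rewrite mulr_gt0 // normr_gt0.
case: (ltrgt0P a) an => // ha _.
- by exists c, y; split; rewrite // scalerA.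
- exists (- c), (- y); split; [exact: C_absconv.2 | by rewrite normrN |].
  rewrite scalerA mulNr scaleNr -scalerN; congr (_ *: _).
  by rewrite opprD opprK scalerN opprK.
Qed.

Lemma gaugeZ_le a x : gauge (a *: x) <= `|a| * gauge x.
Proof.
have [->|an] := eqVneq a 0; first by rewrite scale0r gauge0 normr0 mul0r.
have a0 : 0 < `|a| by rewrite normr_gt0.
apply/ler_addgt0Pr => e e0.
have hx : gauge_radii x (gauge x + e / `|a|) by apply: gauge_radii_gauge_lt; rewrite ltrDl divr_gt0.
apply: le_trans (gauge_le (gauge_radiiZ an hx)) _.
by rewrite mulrDr mulrCA divff ?mulr1 // gt_eqF.
Qed.

Lemma gaugeZ a x : gauge (a *: x) = `|a| * gauge x.
Proof.
have [->|an] := eqVneq a 0; first by rewrite scale0r gauge0 normr0 mul0r.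
apply/eqP; rewrite eq_le gaugeZ_le /=.
have := gaugeZ_le a^-1 (a *: x).
rewrite scalerA mulVf // scale1r normrV ?unitfE //.
by rewrite -ler_pdivlMl ?normr_gt0 // invrK.
Qed.

Lemma gauge_eq0 x : gauge x = 0 -> x = 0.
Proof.
move=> h; apply/normr0_eq0/eqP; rewrite eq_le normr_ge0 andbT.
by have := norm_le_gauge x; rewrite h mulr0.
Qed.

Lemma gauge_equiv_norm : equiv_norm gauge.
Proof.
split; first by split; [exact: gaugeD | exact: gaugeZ | exact: gauge_eq0].
exists (1 / (1 + d)), (1 / d); split; rewrite ?divr_gt0 ?addr_gt0 // => x.
rewrite !mul1r mulrC ler_pdivrMr ?addr_gt0 // mulrC norm_le_gauge.
by rewrite mulrC gauge_le_norm.
Qed.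

Lemma gauge_le1 c y : C c -> `|y| <= 1 -> gauge (c + d *: y) <= 1.
Proof. by move=> Cc y1; apply: gauge_le; split=> //; exists c, y; rewrite scale1r. Qed.

Let C_neq0 : C !=set0. Proof. by exists 0. Qed.
Let B_neq0 : B !=set0. Proof. by exists 0; rewrite /unit_ball /= normr0. Qed.

Section Functional.
Variable f : X -> R.
Hypotheses (f_lin : lin_functional f) (f_cont : continuous f).

Lemma sup_gauge_ball_le : sup (f @` unit_ball gauge) <= sup (f @` C) + d * sup (f @` B).
Proof.
have hC := has_sup_lin_functional f_lin f_cont C_neq0 C_ball.
have hB := has_sup_lin_functional f_lin f_cont B_neq0 (@subset_refl _ B).
have f0 := lin_functional0 f_lin.
have a0 : 0 <= sup (f @` C) by rewrite -f0; apply: sup_upper_bound => //; exists 0.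
have b0 : 0 <= sup (f @` B).
  by rewrite -f0; apply: sup_upper_bound => //; exists 0 => //; rewrite /unit_ball /= normr0.
set a := sup (f @` C) in a0 *; set b := sup (f @` B) in b0 *.
apply: ge_sup => [|_ [u /= Nu <-]].
  by exists (f 0), 0 => //; rewrite /unit_ball /= gauge0 ler01.
apply/ler_addgt0Pr => e e0; set K := a + d * b.
have K0 : 0 <= K by rewrite addr_ge0 // mulr_ge0 // ltW.
have K1 : 0 < K + 1 by lra.
set q := e / (K + 1); have q0 : 0 < q by rewrite divr_gt0.
have qe : q * (K + 1) = e by rewrite divfK // gt_eqF.
have [_ [c [y [Cc y1 ->]]]] : gauge_radii u (1 + q).
  by apply: gauge_radii_gauge_lt; apply: le_lt_trans Nu _; rewrite ltrDl.
rewrite (lin_functionalZ f_lin) (lin_functionalD f_lin) (lin_functionalZ f_lin).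
have hc : f c <= a by apply: sup_upper_bound => //; exists c.
have hy : d * f y <= d * b by rewrite ler_pM2l //; apply: sup_upper_bound => //; exists y.
have : (1 + q) * (f c + d * f y) <= (1 + q) * K by rewrite ler_pM2l ?lerD //; lra.
by move=> h; apply: le_trans h _; rewrite -qe; nra.
Qed.

Lemma slice_gauge_ball al : 0 < al -> exists2 z, B z &
  forall s, slice C f (al / 2) s -> slice (unit_ball gauge) f al (s + d *: z).
Proof.
move=> al0.
have hB := has_sup_lin_functional f_lin f_cont B_neq0 (@subset_refl _ B).
have ald : 0 < al / (2 * d) by rewrite divr_gt0 // mulr_gt0.
have [_ [y y1 <-] hy] := sup_adherent ald hB.
exists y => // s [Cs hs]; split; first exact: gauge_le1.
have := sup_gauge_ball_le.
rewrite (lin_functionalD f_lin) (lin_functionalZ f_lin).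
have : d * (sup (f @` B) - al / (2 * d)) < d * f y by rewrite ltr_pM2l.
have -> : d * (sup (f @` B) - al / (2 * d)) = d * sup (f @` B) - al / 2.
  by field; rewrite gt_eqF.
lra.
Qed.

End Functional.

Lemma is_slice_gauge_ball S : is_slice (unit_ball gauge) S ->
  exists S' z, is_slice C S' /\ forall s, S' s -> S (s + z).
Proof.
move=> [f [al [f_lin f_cont fnz al0 [-> _]]]].
have [z _ hz] := slice_gauge_ball f_lin f_cont al0.
have al2 : 0 < al / 2 by rewrite divr_gt0.
exists (slice C f (al / 2)), (d *: z); split=> //.
exists f, (al / 2); split=> //; split=> //.
have hC := has_sup_lin_functional f_lin f_cont C_neq0 C_ball.
by have [_ [c Cc <-] hc] := sup_adherent al2 hC; exists c.
Qed.

End Gauge.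

Section Diameter.
Context {R : realType} {X : normedModType R}.

Lemma is_ccslices_translate (A A' : set X) :
  (forall S, is_slice A' S ->
     exists S' z, is_slice A S' /\ forall s, S' s -> S (s + z)) ->
  forall D, is_ccslices A' D ->
     exists D' z, is_ccslices A D' /\ forall x, D' x -> D (x + z).
Proof.
move=> slice_translate D [n [lam [S [lam0 lam1 HS ->]]]].
have /choice[S' HS'] : forall i, exists p : set X * X,
    is_slice A p.1 /\ forall s, p.1 s -> S i (s + p.2).
  by move=> i; have [S' [z hz]] := slice_translate _ (HS i); exists (S', z).
exists [set x | exists s : 'I_n -> X,
          (forall i, (S' i).1 (s i)) /\ x = \sum_(i < n) lam i *: s i].
exists (\sum_(i < n) lam i *: (S' i).2); split.
  by exists n, lam, (fun i => (S' i).1); split=> // i; exact: (HS' i).1.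
move=> _ [s [Hs ->]]; exists (fun i => s i + (S' i).2); split.
  by move=> i; apply: (HS' i).2.
by rewrite -big_split; apply: eq_bigr => i _; rewrite scalerDr.
Qed.

Lemma diam_translate_le (N : X -> R) (A B : set X) z :
  (forall x, A x -> B (x + z)) -> (diam N A <= diam N B)%E.
Proof.
move=> AB; apply: ereal_sup_le => _ [x Ax [y Ay <-]].
exists (x + z); first exact: AB.
by exists (y + z); [exact: AB | rewrite opprD addrACA subrr addr0].
Qed.

Lemma diam_gt_dominated (N M : X -> R) (A : set X) (k r : R) :
  0 < k -> (forall x, M x <= k * N x) ->
  (r%:E < diam M A)%E -> ((r / k)%:E < diam N A)%E.
Proof.
move=> k0 MN /ereal_sup_gt[_ [x Ax [y Ay <-]]]; rewrite lte_fin => rM.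
apply: lt_le_trans (ereal_sup_ubound _); last by exists x => //; exists y.
by rewrite lte_fin ltr_pdivrMr // mulrC; apply: lt_le_trans rM (MN _).
Qed.

End Diameter.

Theorem mainTheorem12 (R : realType) (X : completeNormedModType R) (C : set X) :
  C !=set0 -> absolutely_convex C -> closed C ->
  C `<=` unit_ball (fun x : X => `|x|) ->
  (forall D, is_ccslices C D -> diam (fun x : X => `|x|) D = 2%:E) ->
  forall eps : R, 0 < eps ->
  exists N : X -> R, equiv_norm N /\
    forall D, is_ccslices (unit_ball N) D -> ((2 - eps)%:E <= diam N D)%E.
Proof.
move=> [c Cc] C_absconv _ C_ball C_diam eps eps0.
have C0 := absolutely_convex0 C_absconv Cc.
have d0 : 0 < eps / 4 by rewrite divr_gt0.
exists (gauge C (eps / 4)); split; first exact: gauge_equiv_norm.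
move=> D /(is_ccslices_translate (is_slice_gauge_ball C_absconv C0 C_ball d0)).
move=> [D' [z [D'_cc D'D]]]; apply: le_trans (diam_translate_le _ D'D).
have d1 : 0 < 1 + eps / 4 by rewrite addr_gt0.
have D'_diam : ((2 - eps / 4)%:E < diam (fun x : X => `|x|%R) D')%E.
  by rewrite C_diam // lte_fin; lra.
have /ltW := diam_gt_dominated d1 (norm_le_gauge C_absconv C0 C_ball d0) D'_diam.
by apply: le_trans; rewrite lee_fin ler_pdivlMr //; nra.
Qed.
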